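(* Fix $n,p$, a bandwidth $k$, a positive integer $|J_A|$, and constants $M>0$, $\kappa>0$, $\nu>0$. Let $p'=(2k+1)\sqrt{(p-k-1)(p-k)}$ and, for positive integers $a$, $$\rho_a=(Mp'/|J_A|)^{1/a}(a!)^{1/(2a)}\kappa^{1/2}\nu n^{-1/2}.$$ Considering $\rho_a$ as a function of the integer order $a$: (i) if $|J_A|\ge Mp'$, the minimum of $\rho_a$ is achieved at $a=1$; (ii) if $|J_A|<Mp'$, the minimum of $\rho_a$ is achieved at some $a$, which increases as $Mp'/|J_A|$ increases.
   Context: In the paper, $\rho_a$ is the common signal strength $\sigma_{j_1j_2}=\rho$ (for $(j_1,j_2)$ in the signal set $J_A$ of size $|J_A|$ outside the band $|j_1-j_2|\le k$) at which the test based on the order-$a$ U-statistic attains asymptotic power $\Phi(-z_{1-\alpha}+M/\sqrt2)$, in the special case where the in-band covariances equal $\nu$ and the moment constant is $\kappa$; $n$ is the sample size and $p$ the dimension. *)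

From HB Require Import structures.
From mathcomp Require Import all_boot all_order all_algebra.
From mathcomp Require Import all_classical all_reals all_analysis.
Set Implicit Arguments. Unset Strict Implicit. Unset Printing Implicit Defensive.
Import Order.TTheory GRing.Theory Num.Theory.
Local Open Scope ring_scope.

(* p' = (2k+1) sqrt((p-k-1)(p-k)), computed in R (no truncated subtraction). *)
Definition pprime (R : realType) (p k : nat) : R :=
  (2 * k%:R + 1) * Num.sqrt ((p%:R - k%:R - 1) * (p%:R - k%:R)).

Definition rho (R : realType) (n p k JA : nat) (M kappa nu : R) (a : nat) : R :=
  powR (M * pprime R p k / JA%:R) (a%:R^-1)
  * powR ((a`!)%:R) ((2 * a%:R)^-1)
  * powR kappa (2^-1) * nu * powR (n%:R) (- 2^-1).

Definition is_min_order (R : realType) (n p k JA : nat) (M kappa nu : R)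
  (a : nat) : Prop :=
  (0 < a)%N /\ forall b : nat, (0 < b)%N ->
    rho n p k JA M kappa nu a <= rho n p k JA M kappa nu b.

From HB Require Import structures.
From mathcomp Require Import all_boot all_order all_algebra.
From mathcomp Require Import all_classical all_reals all_analysis.
Set Implicit Arguments. Unset Strict Implicit. Unset Printing Implicit Defensive.
Import Order.TTheory GRing.Theory Num.Theory.
Local Open Scope ring_scope.

(** Write [X = M p' / |J_A|]; then [rho_a] is a positive constant times
  [g(X, a) = X^(1/a) (a!)^(1/(2a))], so only [g(X, .)] matters.  Since
  [(a!)^(1/(2a)) >= 1], and [X^(1/a) >= X] when [X <= 1], the order [a = 1] is
  optimal when [X <= 1].  The exponential series gives
  [(2y)^a <= exp(2y) a!], hence [y^a <= a!] once [2^a >= exp(2y)]; so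
  [(a!)^(1/(2a))] is eventually above any bound, [g(X, a) >= g(X, 1)] for all
  large [a], and a minimiser exists among finitely many orders.  Finally, for [a2 < a] the ratio [g(X, a2) / g(X, a)] is
  [X^(1/a2 - 1/a)] times a constant, strictly increasing in [X]: minimisers
  can only move up as [X] grows. *)

Definition order_profile (R : realType) (x : R) (a : nat) : R :=
  powR x a%:R^-1 * powR a`!%:R (2 * a%:R)^-1.

Definition pos_minimizer (R : realType) (f : nat -> R) (a : nat) : Prop :=
  (0 < a)%N /\ forall b : nat, (0 < b)%N -> f a <= f b.

Section PosMinimizer.
Variable R : realType.
Implicit Types f : nat -> R.

Lemma pos_minimizerZr f (c : R) a :
  0 < c -> pos_minimizer (fun b => f b * c) a <-> pos_minimizer f a.
Proof.
move=> c0; rewrite /pos_minimizer.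
by split=> -[a0 fa]; split=> // b b0; have := fa b b0; rewrite ler_pM2r.
Qed.

Lemma exists_pos_minimizer f N :
  (forall b, (N < b)%N -> f 1%N <= f b) -> exists a, pos_minimizer f a.
Proof.
move=> f1_le; pose g (i : 'I_N.+1) := f i.+1.
case: (@arg_minP _ _ _ ord0 predT g) => // i _ gi_min.
exists i.+1; split=> // b b0.
have [bN | Nb] := leqP b N.+1.
  have b_ord : (b.-1 < N.+1)%N by rewrite prednK.
  have := gi_min (Ordinal b_ord) isT; rewrite /g /= prednK //.
by apply: le_trans (gi_min ord0 isT) (f1_le b (ltnW Nb)).
Qed.

End PosMinimizer.

Section OrderProfile.
Variable R : realType.
Implicit Types x y : R.

Lemma powR_ge1 x (r : R) : 1 <= x -> 0 <= r -> 1 <= powR x r.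
Proof. by move=> x1 r0; rewrite -(powRr0 x) ler_powR. Qed.

Lemma powR_fact_ge1 (a : nat) : 1 <= powR (a`!%:R : R) (2 * a%:R)^-1.
Proof. by rewrite powR_ge1 ?ler1n ?fact_gt0 // invr_ge0 mulr_ge0. Qed.

Lemma order_profile1 x : 0 <= x -> order_profile x 1 = x.
Proof. by move=> x0; rewrite /order_profile invr1 powRr1 // powR1 mulr1. Qed.

Lemma order_profile_ge_le1 x (b : nat) :
  0 <= x <= 1 -> (0 < b)%N -> x <= order_profile x b.
Proof.
case/andP; rewrite le_eqVlt => /predU1P[<- _ _ | x0 x1 b0].
  by rewrite mulr_ge0 ?powR_ge0.
apply: le_trans (ger1_powR (r := b%:R^-1) _ _) _; first by rewrite x0.
  by rewrite invf_le1 ?ltr0n // ler1n.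
by rewrite ler_peMr ?powR_ge0 ?powR_fact_ge1.
Qed.

Lemma exprn_le_fact_eventually y :
  0 <= y -> exists N, forall b, (N < b)%N -> y ^+ b <= b`!%:R.
Proof.
move=> y0; have y20 : 0 <= 2 * y by rewrite mulr_ge0.
exists (Num.Def.truncn (expR (2 * y))) => b Nb.
have b0 : (0 < b)%N by apply: leq_ltn_trans Nb.
have exp_le_pow2 : expR (2 * y) <= 2 ^+ b.
  apply: le_trans (ltW (truncnS_gt _)) _; rewrite -natrX ler_nat.
  exact: leq_trans Nb (ltnW (ltn_expl _ (ltnSn 1))).
have series_bound : (2 * y) ^+ b <= expR (2 * y) * b`!%:R.
  rewrite -ler_pdivrMr ?ltr0n ?fact_gt0 //.
  apply: le_trans (expR_ge1Dxn b.-1 y20); rewrite prednK // lerDr //.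
have pow2_gt0 : 0 < 2 ^+ b :> R by rewrite exprn_gt0.
rewrite -(ler_pM2r pow2_gt0) mulrC -exprMn.
apply: le_trans series_bound _.
by rewrite [X in _ <= X]mulrC ler_pM2r ?ltr0n ?fact_gt0.
Qed.

Lemma order_profile_ge_eventually x :
  0 <= x -> exists N, forall b, (N < b)%N -> x <= order_profile x b.
Proof.
move=> x0; have [x1 | x1] := leP x 1.
  by exists 0%N => b b0; rewrite order_profile_ge_le1 ?x0.
have [N xN_le_fact] := exprn_le_fact_eventually (exprn_ge0 2 x0).
exists N => b Nb; have b0 : (0 < b)%N by apply: leq_ltn_trans Nb.
have x_le_root : x <= powR b`!%:R (2 * b%:R)^-1.
  have -> : x = powR (x ^+ (2 * b)) (2 * b%:R)^-1.
    rewrite -powR_mulrn // -powRrM natrM mulfV ?powRr1 //.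
    by rewrite mulf_neq0 // pnatr_eq0 -lt0n.
  apply: ge0_ler_powR; rewrite ?nnegrE ?exprn_ge0 ?ler0n ?invr_ge0 ?mulr_ge0 //.
  by rewrite exprM xN_le_fact.
apply: le_trans x_le_root _.
by rewrite ler_peMl ?powR_ge0 // powR_ge1 ?invr_ge0 // ltW.
Qed.

Lemma order_profile_minimizer_mono x1 x2 (a a2 : nat) :
  0 < x1 -> x1 < x2 ->
  pos_minimizer (order_profile x1) a -> pos_minimizer (order_profile x2) a2 ->
  (a <= a2)%N.
Proof.
move=> x10 x12 [a0 min1] [a20 min2]; rewrite leqNgt; apply/negP => a2a.
pose e : R := a2%:R^-1 - a%:R^-1.
have e0 : 0 < e by rewrite subr_gt0 ltf_pV2 ?posrE ?ltr0n ?ltr_nat.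
have profile_a2 x : 0 < x ->
    order_profile x a2 = powR x a%:R^-1 * (powR x e * powR a2`!%:R (2 * a2%:R)^-1).
  move=> x0; rewrite mulrA -powRD; last by rewrite (gt_eqF x0) implybT.
  by rewrite /order_profile /e addrC subrK.
have x20 : 0 < x2 by apply: lt_trans x12.
have := min1 a2 a20; have := min2 a a0.
rewrite !profile_a2 // /order_profile !ler_pM2l ?powR_gt0 // => le2 le1.
have := le_trans le2 le1; rewrite ler_pM2r ?(lt_le_trans ltr01 (powR_fact_ge1 _)) //.
by apply/negP; rewrite -ltNge gt0_ltr_powR ?nnegrE ?ltW.
Qed.

End OrderProfile.

Lemma is_min_orderE {R : realType} {n p k JA : nat} {M kappa nu : R} {a : nat} :
  (0 < n)%N -> 0 < kappa -> 0 < nu ->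
  is_min_order n p k JA M kappa nu a <->
  pos_minimizer (order_profile (M * pprime R p k / JA%:R)) a.
Proof.
move=> n0 kappa0 nu0.
have scale_gt0 : 0 < powR kappa 2^-1 * nu * powR n%:R (- 2^-1).
  by rewrite !mulr_gt0 // powR_gt0 // ltr0n.
change (pos_minimizer (rho n p k JA M kappa nu) a <->
  pos_minimizer (order_profile (M * pprime R p k / JA%:R)) a).
have rhoE : rho n p k JA M kappa nu = fun b =>
    order_profile (M * pprime R p k / JA%:R) b
    * (powR kappa 2^-1 * nu * powR n%:R (- 2^-1)).
  by apply: funext => b; rewrite /rho /order_profile !mulrA.
by rewrite rhoE; apply: pos_minimizerZr.
Qed.

Lemma pprime_ge0 (R : realType) (p k : nat) : 0 <= pprime R p k.
Proof. by rewrite mulr_ge0 ?sqrtr_ge0 // addr_ge0 // mulr_ge0. Qed.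

Theorem proposition1 (R : realType) (n p k JA : nat) (M kappa nu : R) :
  (0 < n)%N -> (0 < JA)%N -> 0 < M -> 0 < kappa -> 0 < nu ->
  (* (i) *)
  (M * pprime R p k <= JA%:R ->
     is_min_order n p k JA M kappa nu 1%N) /\
  (* (ii) existence of a minimizer *)
  (JA%:R < M * pprime R p k ->
     exists a : nat, is_min_order n p k JA M kappa nu a) /\
  (* (ii) the minimizer is nondecreasing in M p' / |J_A| *)
  (forall (n2 p2 k2 JA2 : nat) (M2 kappa2 nu2 : R),
     (0 < n2)%N -> (0 < JA2)%N -> 0 < M2 -> 0 < kappa2 -> 0 < nu2 ->
     JA%:R < M * pprime R p k ->
     M * pprime R p k / JA%:R < M2 * pprime R p2 k2 / JA2%:R ->
     forall a a2 : nat,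
       is_min_order n p k JA M kappa nu a ->
       is_min_order n2 p2 k2 JA2 M2 kappa2 nu2 a2 ->
       (a <= a2)%N).
Proof.
move=> n0 JA0 M0 kappa0 nu0.
have JA_gt0 : 0 < JA%:R :> R by rewrite ltr0n.
have ratio_ge0 : 0 <= M * pprime R p k / JA%:R.
  by rewrite divr_ge0 ?ler0n // mulr_ge0 ?pprime_ge0 // ltW.
split; [|split].
- move=> le_JA; apply/(is_min_orderE n0 kappa0 nu0); split=> // b b0.
  rewrite order_profile1 // order_profile_ge_le1 // ratio_ge0.
  by rewrite ler_pdivrMr // mul1r.
- move=> _; have [N ge_eventually] := order_profile_ge_eventually ratio_ge0.
  have [a min_a] : exists a, pos_minimizer (order_profile (M * pprime R p k / JA%:R)) a.
    by apply: (exists_pos_minimizer (N := N)) => b Nb; rewrite order_profile1 // ge_eventually.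
  by exists a; apply/(is_min_orderE n0 kappa0 nu0).
- move=> n2 p2 k2 JA2 M2 kappa2 nu2 n20 _ _ kappa20 nu20 lt_JA lt_ratio a a2.
  move=> /(is_min_orderE n0 kappa0 nu0) min_a /(is_min_orderE n20 kappa20 nu20) min_a2.
  apply: order_profile_minimizer_mono lt_ratio min_a min_a2.
  by rewrite (lt_trans ltr01) // ltr_pdivlMr // mul1r.
Qed.
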